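(* Let $(B,\beta)$ be a quadratik ring, $(\mathcal E,X)$ a weakly cofull right functional $(B,\beta)$-module, and $(\mathcal F,Y)$ a cofull right functional $\mathcal K_B\big((\mathcal E\oplus B,X\oplus\beta)\big)$-module. Let $M_B\subseteq\mathcal K_B(\mathcal E\oplus B)$ be the subring of corner multiplication operators $m_b$, $m_b(\eta\oplus d)=0\oplus bd$ ($b,d\in B,\eta\in\mathcal E$), and let $\mathcal FM_B$ be the additive subgroup of $\mathcal F$ formed by the elements $\xi m_b$ ($\xi\in\mathcal F$, $m_b\in M_B$). Make $\mathcal FM_B$ a right functional $(B,\beta)\cong(M_B,\mathrm{Ad}(\beta))$-module via $\eta\cdot b:=\eta m_b$, with $G$-action the restriction of $Y$ and functional space $\Theta_B(\mathcal FM_B):=\{m\circ\phi|_{\mathcal FM_B}: m\in M_B,\ \phi\in\Theta_{\mathcal K_B(\mathcal E\oplus B)}(\mathcal F)\}$. Then $\mathcal FM_B$ is cofull and there is a ring isomorphism $\pi\colon\mathcal K_{\mathcal K_B(\mathcal E\oplus B)}(\mathcal F)\to\mathcal K_B(\mathcal FM_B)$, $\pi(T)=T|_{\mathcal FM_B}$.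
   Context: $G$ is a discrete group; rings are associative, not necessarily commutative or unital, carry $G$-actions, and are quadratik (every element a finite sum of products $ab$). For a ring $(A,\alpha)$, a right functional $A$-module is a right $A$-module $\mathcal E$ with a $G$-action $S$ by additive bijections satisfying $S_g(\xi a)=S_g(\xi)\alpha_g(a)$, together with a functional space $\Theta_A(\mathcal E)\subseteq\mathrm{Hom}_A(\mathcal E,A)$ which is a left $A$-submodule ($(a\varphi)(\xi)=a\varphi(\xi)$) invariant under $\varphi\mapsto\alpha_g\circ\varphi\circ S_{g^{-1}}$. The compact operators $\mathcal K_A(\mathcal E)$ are the finite sums of $\theta_{\eta,\varphi}(\xi)=\eta\varphi(\xi)$ ($\eta\in\mathcal E,\varphi\in\Theta_A(\mathcal E)$), a ring with $G$-action $T\mapsto S_g\circ T\circ S_{g^{-1}}$. $\mathcal E$ is cofull if every element is a finite sum of elements $\xi\varphi(\eta)$, and weakly cofull if every $\xi\in\mathcal E$ can be written $\xi=\sum_i\eta_ib_i$ with $\eta_i\in\mathcal E$, $b_i\in B$. The ring $B$ is a functional module over itself with functionals the left multiplications by elements of $B$; $\mathcal E\oplus B$ carries the diagonal action and functionals $\xi\oplus b\mapsto\varphi(\xi)+\psi(b)$. *)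

From Stdlib Require Import List.
Import ListNotations.
Set Implicit Arguments.
Unset Strict Implicit.

Record group := Group {
  gcar :> Type;
  gmul : gcar -> gcar -> gcar;
  ginv : gcar -> gcar;
  gone : gcar;
  gmulA : forall x y z, gmul x (gmul y z) = gmul (gmul x y) z;
  gmul1 : forall x, gmul gone x = x;
  gmulV : forall x, gmul (ginv x) x = gone }.

Record ringD (G : group) := RingD {
  rcar :> Type;
  radd : rcar -> rcar -> rcar;
  ropp : rcar -> rcar;
  rzero : rcar;
  rmul : rcar -> rcar -> rcar;
  ract : G -> rcar -> rcar }.

Definition is_gring G (R : ringD G) : Prop :=
  (forall x y z : R, radd x (radd y z) = radd (radd x y) z) /\
  (forall x y : R, radd x y = radd y x) /\
  (forall x : R, radd (rzero R) x = x) /\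
  (forall x : R, radd (ropp x) x = rzero R) /\
  (forall x y z : R, rmul x (rmul y z) = rmul (rmul x y) z) /\
  (forall x y z : R, rmul x (radd y z) = radd (rmul x y) (rmul x z)) /\
  (forall x y z : R, rmul (radd x y) z = radd (rmul x z) (rmul y z)) /\
  (forall x : R, ract (gone G) x = x) /\
  (forall g h (x : R), ract (gmul g h) x = ract g (ract h x)) /\
  (forall g (x y : R), ract g (radd x y) = radd (ract g x) (ract g y)) /\
  (forall g (x y : R), ract g (rmul x y) = rmul (ract g x) (ract g y)).

Definition rsum {G} (R : ringD G) (l : list R) : R := fold_right (@radd G R) (rzero R) l.
Arguments rsum {G} R l.

Definition quadratik G (R : ringD G) : Prop :=
  forall x : R, exists s : list (R * R),
    x = rsum R (map (fun p => rmul (fst p) (snd p)) s).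

(* Data of a right module with G-action S and functional space Theta. *)
Record modD G (R : ringD G) := ModD {
  mcar :> Type;
  madd : mcar -> mcar -> mcar;
  mopp : mcar -> mcar;
  mzero : mcar;
  msmul : mcar -> R -> mcar;
  mact : G -> mcar -> mcar;
  mfun : (mcar -> R) -> Prop }.

Arguments mfun {G R} m _.
Definition msum {G} {R : ringD G} (M : modD R) (l : list M) : M :=
  fold_right (@madd G R M) (mzero M) l.
Arguments msum {G R} M l.

(* Right functional module, relativised to a subset Min of the carrier of M
   and a subset Rin of the carrier of the coefficient ring (for the usual
   notion take both predicates to be True). *)
Definition is_rfmod G (R : ringD G) (Rin : R -> Prop) (M : modD R) (Min : M -> Prop) : Prop :=
  Min (mzero M) /\
  (forall x y, Min x -> Min y -> Min (madd x y)) /\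
  (forall x, Min x -> Min (mopp x)) /\
  (forall x a, Min x -> Rin a -> Min (msmul x a)) /\
  (forall g x, Min x -> Min (mact g x)) /\
  (forall x y z, Min x -> Min y -> Min z -> madd x (madd y z) = madd (madd x y) z) /\
  (forall x y, Min x -> Min y -> madd x y = madd y x) /\
  (forall x, Min x -> madd (mzero M) x = x) /\
  (forall x, Min x -> madd (mopp x) x = mzero M) /\
  (forall x y a, Min x -> Min y -> Rin a ->
      msmul (madd x y) a = madd (msmul x a) (msmul y a)) /\
  (forall x a b, Min x -> Rin a -> Rin b ->
      msmul x (radd a b) = madd (msmul x a) (msmul x b)) /\
  (forall x a b, Min x -> Rin a -> Rin b ->
      msmul (msmul x a) b = msmul x (rmul a b)) /\
  (forall x, Min x -> mact (gone G) x = x) /\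
  (forall g h x, Min x -> mact (gmul g h) x = mact g (mact h x)) /\
  (forall g x y, Min x -> Min y -> mact g (madd x y) = madd (mact g x) (mact g y)) /\
  (forall g x a, Min x -> Rin a -> mact g (msmul x a) = msmul (mact g x) (ract g a)) /\
  (forall phi, mfun M phi ->
      (forall x, Min x -> Rin (phi x)) /\
      (forall x y, Min x -> Min y -> phi (madd x y) = radd (phi x) (phi y)) /\
      (forall x a, Min x -> Rin a -> phi (msmul x a) = rmul (phi x) a)) /\
  mfun M (fun _ => rzero R) /\
  (forall phi psi, mfun M phi -> mfun M psi -> mfun M (fun x => radd (phi x) (psi x))) /\
  (forall phi, mfun M phi -> mfun M (fun x => ropp (phi x))) /\
  (forall a phi, Rin a -> mfun M phi -> mfun M (fun x => rmul a (phi x))) /\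
  (forall g phi, mfun M phi -> mfun M (fun x => ract g (phi (mact (ginv g) x)))).

Definition compact G (R : ringD G) (M : modD R) (Min : M -> Prop) (T : M -> M) : Prop :=
  exists s : list (mcar M * (mcar M -> R)),
    (forall p, In p s -> Min (fst p) /\ mfun M (snd p)) /\
    forall x, Min x -> T x = msum M (map (fun p => msmul (fst p) (snd p x)) s).

Definition cofull G (R : ringD G) (M : modD R) (Min : M -> Prop) : Prop :=
  forall x, Min x -> exists s : list (mcar M * (mcar M -> R) * mcar M),
    (forall t, In t s -> Min (fst (fst t)) /\ mfun M (snd (fst t)) /\ Min (snd t)) /\
    x = msum M (map (fun t => msmul (fst (fst t)) (snd (fst t) (snd t))) s).

Definition weakly_cofull G (R : ringD G) (M : modD R) : Prop :=
  forall x : M, exists s : list (mcar M * rcar R),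
    x = msum M (map (fun p => msmul (fst p) (snd p)) s).

Definition EBmod G (B : ringD G) (E : modD B) : modD B :=
  @ModD G B (mcar E * rcar B)%type
    (fun p q => (madd (fst p) (fst q), radd (snd p) (snd q)))
    (fun p => (mopp (fst p), ropp (snd p)))
    (mzero E, rzero B)
    (fun p b => (msmul (fst p) b, rmul (snd p) b))
    (fun g p => (mact g (fst p), ract g (snd p)))
    (fun psi => exists (phi : mcar E -> rcar B) (c : rcar B), mfun E phi /\
        psi = (fun p => radd (phi (fst p)) (rmul c (snd p)))).
Arguments EBmod {G B} E.

Definition opRing G (R : ringD G) (M : modD R) : ringD G :=
  @RingD G (mcar M -> mcar M)
    (fun S T x => madd (S x) (T x))
    (fun T x => mopp (T x))
    (fun _ => mzero M)
    (fun S T x => S (T x))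
    (fun g T x => mact g (T (mact (ginv g) x))).
Arguments opRing {G R} M.

(* K_B(E (+) B), as the ambient operator ring; its elements are the
   operators satisfying [compact (EBmod E) (fun _ => True)]. *)
Definition KB G (B : ringD G) (E : modD B) : ringD G := opRing (EBmod E).
Arguments KB {G B} E.

Definition mb G (B : ringD G) (E : modD B) (b : rcar B) : rcar (KB E) :=
  fun p => (mzero E, rmul b (snd p)).
Arguments mb {G B} E b _.

Definition MB G (B : ringD G) (E : modD B) (T : rcar (KB E)) : Prop :=
  exists b, T = mb E b.
Arguments MB {G B} E T.

Definition FMB G (B : ringD G) (E : modD B) (F : modD (KB E)) (x : mcar F) : Prop :=
  exists s : list (mcar F * rcar B),
    x = msum F (map (fun p => msmul (fst p) (mb E (snd p))) s).
Arguments FMB {G B E} F x.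

Definition ThetaFMB G (B : ringD G) (E : modD B) (F : modD (KB E))
    (psi : mcar F -> rcar (KB E)) : Prop :=
  exists s : list (rcar (KB E) * (mcar F -> rcar (KB E))),
    (forall p, In p s -> MB E (fst p) /\ mfun F (snd p)) /\
    forall x, FMB F x -> psi x = rsum (KB E) (map (fun p => rmul (fst p) (snd p x)) s).
Arguments ThetaFMB {G B E} F psi.

Definition FMBmod G (B : ringD G) (E : modD B) (F : modD (KB E)) : modD (KB E) :=
  @ModD G (KB E) (mcar F) (@madd _ _ F) (@mopp _ _ F) (mzero F) (@msmul _ _ F)
    (@mact _ _ F) (@ThetaFMB G B E F).

Arguments FMBmod {G B E} F.
Arguments is_gring {G} R.
Arguments quadratik {G} R.
Arguments is_rfmod {G R} Rin M Min.
Arguments compact {G R} M Min T.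
Arguments cofull {G R} M Min.
Arguments weakly_cofull {G R} M.

From Stdlib Require Import List FunctionalExtensionality.
Import ListNotations.

(* The heart of the matter: for z in F and phi in Theta(F), the operator x |-> z phi(x) is a
   finite sum of theta_{xi, m_c o phi'} with xi in F M_B and phi' in Theta(F).  Indeed, F being
   cofull, z is a sum of elements zeta chi(w) with chi(w) compact on E (+) B, hence a sum of
   operators theta_{e, psi}.  Since E is weakly cofull and B is quadratik, E (+) B is weakly
   cofull, so one may take e = e' b with b = p1 p2 q1 q2, and then
     theta_{e' b, psi} = theta_{e', 0 (+) p1} o m_{p2} o m_{q1} o theta_{(0, q2), psi},
   which splits zeta chi(w) phi(x) as (zeta theta_{e', 0 (+) p1} m_{p2}) (m_{q1} theta phi(x)).
   The values m_c phi(xi m_b) lie in M_B because the corner d |-> K(0 (+) d) of a compact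
   operator K of E (+) B is a left multiplication of B.
   Consequently compact operators of F preserve F M_B and restrict to compact operators of
   F M_B, F M_B is cofull, and F is spanned by F M_B K_B(E (+) B), so a compact operator is
   determined by its restriction.  Conversely every functional of F M_B is the restriction of
   a functional of F, so every compact operator of F M_B extends to one of F. *)

(** * Abelian groups and finite sums *)

Definition abgroup {A : Type} (add : A -> A -> A) (opp : A -> A) (zero : A) : Prop :=
  (forall x y z, add x (add y z) = add (add x y) z) /\
  (forall x y, add x y = add y x) /\
  (forall x, add zero x = x) /\
  (forall x, add (opp x) x = zero).

Section AbelianGroup.
Context {A : Type} {add : A -> A -> A} {opp : A -> A} {zero : A} (HA : abgroup add opp zero).

Lemma addA x y z : add x (add y z) = add (add x y) z. Proof. apply HA. Qed.
Lemma addC x y : add x y = add y x. Proof. apply HA. Qed.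
Lemma add0l x : add zero x = x. Proof. apply HA. Qed.
Lemma addNl x : add (opp x) x = zero. Proof. apply HA. Qed.
Lemma add0r x : add x zero = x. Proof. rewrite addC; apply add0l. Qed.
Lemma addNr x : add x (opp x) = zero. Proof. rewrite addC; apply addNl. Qed.

Lemma add_cancel_l a x y : add a x = add a y -> x = y.
Proof.
  intros Hxy.
  rewrite <- (add0l x), <- (add0l y), <- (addNl a), <- !addA, Hxy; reflexivity.
Qed.

Lemma add_idem_zero x : add x x = x -> x = zero.
Proof. intros Hx; apply (add_cancel_l x); rewrite Hx, add0r; reflexivity. Qed.

Lemma opp_unique x y : add y x = zero -> y = opp x.
Proof. intros Hyx; apply (add_cancel_l x); rewrite (addC x y), Hyx, addNr; reflexivity. Qed.

Lemma addACA a b c d : add (add a b) (add c d) = add (add a c) (add b d).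
Proof. rewrite <- !addA; f_equal; rewrite !addA; f_equal; apply addC. Qed.

Lemma oppD x y : opp (add x y) = add (opp x) (opp y).
Proof. symmetry; apply opp_unique; rewrite addACA, !addNl, add0l; reflexivity. Qed.

Lemma opp0 : opp zero = zero.
Proof. symmetry; apply opp_unique, add0r. Qed.

Lemma sum_app l1 l2 :
  fold_right add zero (l1 ++ l2) = add (fold_right add zero l1) (fold_right add zero l2).
Proof.
  induction l1 as [|x l1 IH]; cbn; [rewrite add0l | rewrite IH, addA]; reflexivity.
Qed.

Lemma sum_map_add {T : Type} (f g : T -> A) l :
  fold_right add zero (map (fun t => add (f t) (g t)) l) =
  add (fold_right add zero (map f l)) (fold_right add zero (map g l)).
Proof.
  induction l as [|t l IH]; cbn; [rewrite add0l | rewrite IH, addACA]; reflexivity.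
Qed.

Lemma additive_zero {A' : Type} (add' : A' -> A' -> A') (zero' : A') (h : A' -> A) :
  add' zero' zero' = zero' -> (forall x y, h (add' x y) = add (h x) (h y)) -> h zero' = zero.
Proof. intros H0 Hh; apply add_idem_zero; rewrite <- Hh, H0; reflexivity. Qed.

End AbelianGroup.

Lemma additive_sum {A A' : Type} (add : A -> A -> A) (zero : A) (add' : A' -> A' -> A') (zero' : A')
  (h : A -> A') :
  (forall x y, h (add x y) = add' (h x) (h y)) -> h zero = zero' ->
  forall l, h (fold_right add zero l) = fold_right add' zero' (map h l).
Proof. intros Hh H0; induction l as [|x l IH]; cbn; [|rewrite Hh, IH]; auto. Qed.

Lemma sum_ind {A : Type} (add : A -> A -> A) (zero : A) (P : A -> Prop) :
  P zero -> (forall x y, P x -> P y -> P (add x y)) ->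
  forall l, (forall x, In x l -> P x) -> P (fold_right add zero l).
Proof. intros P0 PD; induction l; cbn; auto. Qed.

(** * Rings with a G-action *)

Lemma gmulV_r (G : group) (x : G) : gmul x (ginv x) = gone G.
Proof.
  rewrite <- (gmul1 (gmul x (ginv x))), <- (gmulV (ginv x)) at 1.
  rewrite <- gmulA, (gmulA (ginv x) x), gmulV, gmul1; apply gmulV.
Qed.

Section GRing.
Context {G : group} {R : ringD G} (HR : is_gring R).

Lemma gring_abgroup : abgroup (@radd G R) (@ropp G R) (rzero R).
Proof. destruct HR as (h1 & h2 & h3 & h4 & _); repeat split; auto. Qed.

Let HRa := gring_abgroup.

Lemma rmulA (x y z : R) : rmul x (rmul y z) = rmul (rmul x y) z. Proof. apply HR. Qed.
Lemma rmulDr (x y z : R) : rmul x (radd y z) = radd (rmul x y) (rmul x z). Proof. apply HR. Qed.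
Lemma rmulDl (x y z : R) : rmul (radd x y) z = radd (rmul x z) (rmul y z). Proof. apply HR. Qed.
Lemma ract1 (x : R) : ract (gone G) x = x. Proof. apply HR. Qed.
Lemma ractM g h (x : R) : ract (gmul g h) x = ract g (ract h x). Proof. apply HR. Qed.
Lemma ractD g (x y : R) : ract g (radd x y) = radd (ract g x) (ract g y). Proof. apply HR. Qed.
Lemma ract_mul g (x y : R) : ract g (rmul x y) = rmul (ract g x) (ract g y). Proof. apply HR. Qed.

Lemma rmul0l (x : R) : rmul (rzero R) x = rzero R.
Proof. apply (add_idem_zero HRa); rewrite <- rmulDl, (add0l HRa); reflexivity. Qed.
Lemma rmul0r (x : R) : rmul x (rzero R) = rzero R.
Proof. apply (add_idem_zero HRa); rewrite <- rmulDr, (add0l HRa); reflexivity. Qed.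
Lemma rmulNl (x y : R) : rmul (ropp x) y = ropp (rmul x y).
Proof.
  apply (opp_unique HRa); rewrite <- rmulDl, (addNl HRa); apply rmul0l.
Qed.
Lemma rmulNr (x y : R) : rmul x (ropp y) = ropp (rmul x y).
Proof.
  apply (opp_unique HRa); rewrite <- rmulDr, (addNl HRa); apply rmul0r.
Qed.
Lemma ractKV g (x : R) : ract g (ract (ginv g) x) = x.
Proof. rewrite <- ractM, gmulV_r; apply ract1. Qed.

End GRing.

Lemma quadratik_ind {G : group} {R : ringD G} (HRq : quadratik R) (P : R -> Prop) :
  P (rzero R) -> (forall x y, P x -> P y -> P (radd x y)) -> (forall x y, P (rmul x y)) ->
  forall x, P x.
Proof.
  intros P0 PD PM x; destruct (HRq x) as [s ->].
  unfold rsum; apply sum_ind; auto.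
  intros y Hy; apply in_map_iff in Hy; destruct Hy as [p [<- _]]; apply PM.
Qed.

Lemma quadratik_ind4 {G : group} {R : ringD G} (HR : is_gring R) (HRq : quadratik R)
  (P : R -> Prop) :
  P (rzero R) -> (forall x y, P x -> P y -> P (radd x y)) ->
  (forall p1 p2 q1 q2, P (rmul (rmul p1 p2) (rmul q1 q2))) ->
  forall x, P x.
Proof.
  intros P0 PD PM.
  apply (quadratik_ind HRq); auto.
  intros p q; revert q; apply (quadratik_ind HRq).
  - rewrite (rmul0r HR); exact P0.
  - intros q q' Hq Hq'; rewrite (rmulDr HR); auto.
  - intros q1 q2; revert p; apply (quadratik_ind HRq).
    + rewrite (rmul0l HR); exact P0.
    + intros p p' Hp Hp'; rewrite (rmulDl HR); auto.
    + intros p1 p2; apply PM.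
Qed.

(** * Functional modules and their compact operators *)

Section FunctionalModule.
Context {G : group} {R : ringD G} {Rin : R -> Prop} {M : modD R}
  (HM : is_rfmod Rin M (fun _ => True)).

Lemma rfmod_abgroup : abgroup (@madd G R M) (@mopp G R M) (mzero M).
Proof. repeat split; intros; apply HM; auto. Qed.

Lemma msmulDl (x y : M) a : Rin a -> msmul (madd x y) a = madd (msmul x a) (msmul y a).
Proof. intros; apply HM; auto. Qed.
Lemma msmulDr (x : M) a b : Rin a -> Rin b -> msmul x (radd a b) = madd (msmul x a) (msmul x b).
Proof. intros; apply HM; auto. Qed.
Lemma msmulA (x : M) a b : Rin a -> Rin b -> msmul (msmul x a) b = msmul x (rmul a b).
Proof. intros; apply HM; auto. Qed.
Lemma mact1 (x : M) : mact (gone G) x = x.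
Proof. apply HM; auto. Qed.
Lemma mactM g h (x : M) : mact (gmul g h) x = mact g (mact h x).
Proof. apply HM; auto. Qed.
Lemma mactD g (x y : M) : mact g (madd x y) = madd (mact g x) (mact g y).
Proof. apply HM; auto. Qed.
Lemma mact_smul g (x : M) a : Rin a -> mact g (msmul x a) = msmul (mact g x) (ract g a).
Proof. intros; apply HM; auto. Qed.

Section Functional.
Variable phi : M -> R.
Hypothesis Hphi : mfun M phi.

Lemma functional_in x : Rin (phi x).
Proof. apply HM; auto. Qed.
Lemma functional_add x y : phi (madd x y) = radd (phi x) (phi y).
Proof. apply HM; auto. Qed.
Lemma functional_smul x a : Rin a -> phi (msmul x a) = rmul (phi x) a.
Proof. intros; apply HM; auto. Qed.
End Functional.

Lemma mfun_zero : mfun M (fun _ => rzero R).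
Proof. apply HM. Qed.
Lemma mfun_add phi psi : mfun M phi -> mfun M psi -> mfun M (fun x => radd (phi x) (psi x)).
Proof. apply HM. Qed.
Lemma mfun_opp phi : mfun M phi -> mfun M (fun x => ropp (phi x)).
Proof. apply HM. Qed.
Lemma mfun_lmul a phi : Rin a -> mfun M phi -> mfun M (fun x => rmul a (phi x)).
Proof. apply HM. Qed.
Lemma mfun_act g phi : mfun M phi -> mfun M (fun x => ract g (phi (mact (ginv g) x))).
Proof. apply HM. Qed.

Lemma mfun_sum (s : list (R * (M -> R))) :
  (forall p, In p s -> Rin (fst p) /\ mfun M (snd p)) ->
  mfun M (fun x => rsum R (map (fun p => rmul (fst p) (snd p x)) s)).
Proof.
  induction s as [|p s IH]; intros Hs; [apply mfun_zero|].
  destruct (Hs p (or_introl eq_refl)) as [Hp1 Hp2].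
  apply (mfun_add (fun x => rmul (fst p) (snd p x))); [apply mfun_lmul; auto|].
  apply IH; intros q Hq; apply Hs; right; exact Hq.
Qed.

Let HMa := rfmod_abgroup.

Lemma msmul0l a : Rin a -> msmul (mzero M) a = mzero M.
Proof. intros Ha; apply (add_idem_zero HMa); rewrite <- msmulDl, (add0l HMa); auto. Qed.

Lemma msmul0r (x : M) : Rin (rzero R) -> radd (rzero R) (rzero R) = rzero R ->
  msmul x (rzero R) = mzero M.
Proof. intros H0 H00; apply (add_idem_zero HMa); rewrite <- msmulDr, H00; auto. Qed.

Lemma msmulNl (x : M) a : Rin a -> msmul (mopp x) a = mopp (msmul x a).
Proof.
  intros Ha; apply (opp_unique HMa); rewrite <- msmulDl, (addNl HMa); auto using msmul0l.
Qed.

Lemma msmul_sum_l a l : Rin a -> msmul (msum M l) a = msum M (map (fun x => msmul x a) l).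
Proof.
  intros Ha; apply (additive_sum _ _ _ _ (fun x => msmul x a)); auto using msmulDl, msmul0l.
Qed.

Lemma mact0 g : mact g (mzero M) = mzero M.
Proof. apply (add_idem_zero HMa); rewrite <- mactD, (add0l HMa); reflexivity. Qed.

Lemma mactVK g (x : M) : mact (ginv g) (mact g x) = x.
Proof. rewrite <- mactM, gmulV; apply mact1. Qed.

Lemma functional_zero phi : abgroup (@radd G R) (@ropp G R) (rzero R) -> mfun M phi ->
  phi (mzero M) = rzero R.
Proof.
  intros HRa Hphi; apply (additive_zero HRa (@madd G R M)); [apply (add0l HMa)|].
  apply functional_add, Hphi.
Qed.

Lemma is_rfmod_sub (Rin' : R -> Prop) (N : M -> Prop) (Theta : (M -> R) -> Prop) :
  (forall a, Rin' a -> Rin a) ->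
  N (mzero M) -> (forall x y, N x -> N y -> N (madd x y)) -> (forall x, N x -> N (mopp x)) ->
  (forall x a, N x -> Rin' a -> N (msmul x a)) -> (forall g x, N x -> N (mact g x)) ->
  (forall psi, Theta psi ->
     (forall x, N x -> Rin' (psi x)) /\
     (forall x y, N x -> N y -> psi (madd x y) = radd (psi x) (psi y)) /\
     (forall x a, N x -> Rin' a -> psi (msmul x a) = rmul (psi x) a)) ->
  Theta (fun _ => rzero R) ->
  (forall phi psi, Theta phi -> Theta psi -> Theta (fun x => radd (phi x) (psi x))) ->
  (forall phi, Theta phi -> Theta (fun x => ropp (phi x))) ->
  (forall a phi, Rin' a -> Theta phi -> Theta (fun x => rmul a (phi x))) ->
  (forall g phi, Theta phi -> Theta (fun x => ract g (phi (mact (ginv g) x)))) ->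
  is_rfmod Rin' (ModD (@madd G R M) (@mopp G R M) (mzero M) (@msmul G R M) (@mact G R M) Theta) N.
Proof.
  intros Hsub; unfold is_rfmod; cbn; intuition; apply HM; auto.
Qed.

End FunctionalModule.

Definition cofull_at {G : group} {R : ringD G} (M : modD R) (Min : M -> Prop) (x : M) : Prop :=
  exists s : list (mcar M * (mcar M -> R) * mcar M),
    (forall t, In t s -> Min (fst (fst t)) /\ mfun M (snd (fst t)) /\ Min (snd t)) /\
    x = msum M (map (fun t => msmul (fst (fst t)) (snd (fst t) (snd t))) s).

Section CofullAt.
Context {G : group} {R : ringD G} {M : modD R} {Min : M -> Prop} {opp : M -> M}
  (HMa : abgroup (@madd G R M) opp (mzero M)).

Lemma cofull_at_zero : cofull_at M Min (mzero M).
Proof. exists []; split; [intros t [] | reflexivity]. Qed.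

Lemma cofull_at_add x y : cofull_at M Min x -> cofull_at M Min y -> cofull_at M Min (madd x y).
Proof.
  intros [s1 [Hs1 ->]] [s2 [Hs2 ->]]; exists (s1 ++ s2); split.
  - intros t Ht; apply in_app_or in Ht; destruct Ht; auto.
  - unfold msum; rewrite map_app, (sum_app HMa); reflexivity.
Qed.

Lemma cofull_at_sum l : (forall x, In x l -> cofull_at M Min x) -> cofull_at M Min (msum M l).
Proof. apply sum_ind; [exact cofull_at_zero | exact cofull_at_add]. Qed.

End CofullAt.

Lemma weakly_cofull_ind {G : group} {R : ringD G} {M : modD R} (HMw : weakly_cofull M)
  (P : M -> Prop) :
  P (mzero M) -> (forall x y, P x -> P y -> P (madd x y)) -> (forall x a, P (msmul x a)) ->
  forall x, P x.
Proof.
  intros P0 PD PS x; destruct (HMw x) as [s ->].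
  unfold msum; apply sum_ind; auto.
  intros y Hy; apply in_map_iff in Hy; destruct Hy as [p [<- _]]; apply PS.
Qed.

Definition theta {G : group} {R : ringD G} (M : modD R) (e : M) (psi : M -> R) : M -> M :=
  fun y => msmul e (psi y).

Section CompactOperators.
Context {G : group} {R : ringD G} {Rin : R -> Prop} {M : modD R}
  (HM : is_rfmod Rin M (fun _ => True)).

Let HMa := rfmod_abgroup HM.
Local Notation compact_op := (compact M (fun _ => True)).

Lemma opRing_abgroup : abgroup (@radd G (opRing M)) (@ropp G (opRing M)) (rzero (opRing M)).
Proof.
  repeat split; intros; apply functional_extensionality; intro w; cbn.
  - apply (addA HMa).
  - apply (addC HMa).
  - apply (add0l HMa).
  - apply (addNl HMa).
Qed.

Lemma compact_theta e psi : mfun M psi -> compact_op (theta M e psi).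
Proof.
  intros Hpsi; exists [(e, psi)]; split.
  - intros p [<- | []]; auto.
  - intros x _; symmetry; apply (add0r HMa).
Qed.

Lemma theta_zero_l psi : mfun M psi -> theta M (mzero M) psi = rzero (opRing M).
Proof.
  intros Hpsi; apply functional_extensionality; intro y.
  apply (msmul0l HM), (functional_in HM _ Hpsi).
Qed.

Lemma theta_add_l e1 e2 psi : mfun M psi ->
  theta M (madd e1 e2) psi = radd (r := opRing M) (theta M e1 psi) (theta M e2 psi).
Proof.
  intros Hpsi; apply functional_extensionality; intro y.
  apply (msmulDl HM), (functional_in HM _ Hpsi).
Qed.

Lemma compact_zero : compact_op (rzero (opRing M)).
Proof. exists []; split; [intros p [] | reflexivity]. Qed.

Lemma compact_add K1 K2 : compact_op K1 -> compact_op K2 -> compact_op (radd (r := opRing M) K1 K2).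
Proof.
  intros [s1 [Hs1 HK1]] [s2 [Hs2 HK2]]; exists (s1 ++ s2); split.
  - intros p Hp; apply in_app_or in Hp; destruct Hp; auto.
  - intros x _; cbn; rewrite HK1, HK2 by auto; unfold msum; rewrite map_app, (sum_app HMa);
    reflexivity.
Qed.

Section Compact.
Variable K : opRing M.
Hypothesis HK : compact_op K.

Lemma compact_additive x y : K (madd x y) = madd (K x) (K y).
Proof.
  destruct HK as [s [Hs HKs]]; rewrite !HKs by auto; unfold msum.
  rewrite <- (sum_map_add HMa); f_equal; apply map_ext_in; intros p Hp.
  destruct (Hs p Hp) as [_ Hp2].
  rewrite (functional_add HM _ Hp2); apply (msmulDr HM); apply (functional_in HM _ Hp2).
Qed.

Lemma compact_zero_at : K (mzero M) = mzero M.
Proof. apply (additive_zero HMa (@madd G R M)); [apply (add0l HMa) | apply compact_additive]. Qed.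

Lemma compact_linear x a : Rin a -> K (msmul x a) = msmul (K x) a.
Proof.
  intros Ha; destruct HK as [s [Hs HKs]]; rewrite !HKs by auto.
  rewrite (msmul_sum_l HM _ _ Ha), map_map; f_equal; apply map_ext_in; intros p Hp.
  destruct (Hs p Hp) as [_ Hp2].
  rewrite (functional_smul HM _ Hp2) by exact Ha; symmetry; apply (msmulA HM); auto.
  apply (functional_in HM _ Hp2).
Qed.

Lemma compact_msum_smul {T : Type} (l : list T) (u : T -> M) (a : T -> R) :
  (forall t, In t l -> Rin (a t)) ->
  K (msum M (map (fun t => msmul (u t) (a t)) l)) = msum M (map (fun t => msmul (K (u t)) (a t)) l).
Proof.
  intros Hl; unfold msum.
  rewrite (additive_sum _ _ _ _ K compact_additive compact_zero_at), map_map.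
  f_equal; apply map_ext_in; intros t Ht; apply compact_linear, Hl, Ht.
Qed.

Lemma compact_mul K' : compact_op K' -> compact_op (rmul (r := opRing M) K K').
Proof.
  intros [s [Hs HK']]; exists (map (fun p => (K (fst p), snd p)) s); split.
  - intros p Hp; apply in_map_iff in Hp; destruct Hp as [q [<- Hq]]; split;
    [exact I | exact (proj2 (Hs q Hq))].
  - intros x _; cbn; rewrite HK' by exact I.
    rewrite compact_msum_smul, map_map; [reflexivity|].
    intros p Hp; apply (functional_in HM), (proj2 (Hs p Hp)).
Qed.

End Compact.

Lemma opRing_actD g K1 K2 :
  ract (r := opRing M) g (radd K1 K2) = radd (ract (r := opRing M) g K1) (ract g K2).
Proof. apply functional_extensionality; intro y; apply (mactD HM). Qed.

Lemma opRing_act0 g : ract (r := opRing M) g (rzero (opRing M)) = rzero (opRing M).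
Proof. apply functional_extensionality; intro y; apply (mact0 HM). Qed.

Lemma opRing_act_mul g K1 K2 :
  ract (r := opRing M) g (rmul K1 K2) = rmul (ract (r := opRing M) g K1) (ract g K2).
Proof. apply functional_extensionality; intro y; cbn; rewrite (mactVK HM); reflexivity. Qed.

End CompactOperators.

(** * The module E (+) B and its corner multiplications *)

Section DirectSum.
Context {G : group} {B : ringD G} (HB : is_gring B) {E : modD B}
  (HE : is_rfmod (fun _ => True) E (fun _ => True)).

Let HBa := gring_abgroup HB.
Let HEa := rfmod_abgroup HE.

Lemma EB_rfmod : is_rfmod (fun _ => True) (EBmod E) (fun _ => True).
Proof.
  unfold is_rfmod; cbn.
  repeat match goal with |- _ /\ _ => split end.
  all: try (intros; exact I).
  all: try (intros; f_equal; first [apply HBa | apply HEa | apply HB | apply HE]; auto; fail).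
  - intros [u v] _; cbn; f_equal; [apply (add0l HEa) | apply (add0l HBa)].
  - intros [u v] a b _ _ _; cbn; f_equal; [apply (msmulA HE); auto | symmetry; apply (rmulA HB)].
  - intros [u v] _; cbn; f_equal; [apply (mact1 HE) | apply (ract1 HB)].
  - intros psi (phi & c & Hphi & ->); repeat split; intros [u v] **; cbn.
    + rewrite (functional_add HE _ Hphi), (rmulDr HB); apply (addACA HBa).
    + rewrite (functional_smul HE _ Hphi), (rmulDl HB), (rmulA HB); auto.
  - exists (fun _ => rzero B), (rzero B); split; [apply (mfun_zero HE)|].
    apply functional_extensionality; intros p; rewrite (rmul0l HB), (add0l HBa); reflexivity.
  - intros psi1 psi2 (phi1 & c1 & Hphi1 & ->) (phi2 & c2 & Hphi2 & ->).
    exists (fun x => radd (phi1 x) (phi2 x)), (radd c1 c2); split; [apply (mfun_add HE); auto|].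
    apply functional_extensionality; intros p; rewrite (rmulDl HB); apply (addACA HBa).
  - intros psi (phi & c & Hphi & ->).
    exists (fun x => ropp (phi x)), (ropp c); split; [apply (mfun_opp HE); auto|].
    apply functional_extensionality; intros p; rewrite (rmulNl HB); apply (oppD HBa).
  - intros a psi _ (phi & c & Hphi & ->).
    exists (fun x => rmul a (phi x)), (rmul a c); split; [apply (mfun_lmul HE); auto|].
    apply functional_extensionality; intros p; rewrite (rmulDr HB), (rmulA HB); reflexivity.
  - intros g psi (phi & c & Hphi & ->).
    exists (fun x => ract g (phi (mact (ginv g) x))), (ract g c).
    split; [apply (mfun_act HE); auto|].
    apply functional_extensionality; intros p; cbn.
    rewrite (ractD HB), (ract_mul HB), (ractKV HB); reflexivity.
Qed.

Let HEBa := rfmod_abgroup EB_rfmod.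

Lemma EB_weakly_cofull : quadratik B -> weakly_cofull E -> weakly_cofull (EBmod E).
Proof.
  intros HBq HEw [u v].
  destruct (HEw u) as [s1 Hu]; destruct (HBq v) as [s2 Hv].
  set (f1 := fun p : E * B => ((fst p, rzero B) : EBmod E, snd p)).
  set (f2 := fun p : B * B => ((mzero E, fst p) : EBmod E, snd p)).
  exists (map f1 s1 ++ map f2 s2).
  unfold msum; rewrite map_app, (sum_app HEBa), !map_map.
  replace (u, v) with (@madd _ _ (EBmod E) (u, rzero B) (mzero E, v))
    by (cbn; rewrite (add0r HEa), (add0l HBa); reflexivity).
  assert (Hfst : forall l, ((msum E l, rzero B) : EBmod E) =
    msum (EBmod E) (map (fun x => (x, rzero B)) l)).
  { apply (additive_sum _ _ _ _ (fun x : E => (x, rzero B) : EBmod E)); [|reflexivity].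
    intros x y; cbn; rewrite (add0l HBa); reflexivity. }
  assert (Hsnd : forall l, ((mzero E, rsum B l) : EBmod E) =
    msum (EBmod E) (map (fun b => (mzero E, b)) l)).
  { apply (additive_sum _ _ _ _ (fun b : B => (mzero E, b) : EBmod E)); [|reflexivity].
    intros x y; cbn; rewrite (add0l HEa); reflexivity. }
  f_equal.
  - rewrite Hu, Hfst, map_map; unfold msum; f_equal; apply map_ext; intros p; cbn.
    rewrite (rmul0l HB); reflexivity.
  - rewrite Hv, Hsnd, map_map; unfold msum; f_equal; apply map_ext; intros p; cbn.
    rewrite (msmul0l HE); auto.
Qed.

End DirectSum.

Section CornerMultiplications.
Context {G : group} {B : ringD G} (HB : is_gring B) {E : modD B}
  (HE : is_rfmod (fun _ => True) E (fun _ => True)).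

Let HBa := gring_abgroup HB.
Let HEa := rfmod_abgroup HE.
Let HEB := EB_rfmod HB HE.
Local Notation compactEB := (compact (EBmod E) (fun _ => True)).

Lemma mb_add b c : radd (r := KB E) (mb E b) (mb E c) = mb E (radd b c).
Proof.
  apply functional_extensionality; intros y; unfold mb; cbn.
  rewrite (add0l HEa), (rmulDl HB); reflexivity.
Qed.

Lemma mb_zero : mb E (rzero B) = rzero (KB E).
Proof.
  apply functional_extensionality; intros y; unfold mb; cbn.
  rewrite (rmul0l HB); reflexivity.
Qed.

Lemma mb_mul b c : rmul (r := KB E) (mb E b) (mb E c) = mb E (rmul b c).
Proof.
  apply functional_extensionality; intros y; unfold mb; cbn.
  rewrite (rmulA HB); reflexivity.
Qed.

Lemma mb_act g b : ract (r := KB E) g (mb E b) = mb E (ract g b).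
Proof.
  apply functional_extensionality; intros y; unfold mb; cbn.
  rewrite (mact0 HE), (ract_mul HB), (ractKV HB); reflexivity.
Qed.

Lemma mb_mulDr c K1 K2 :
  rmul (r := KB E) (mb E c) (radd K1 K2) = radd (rmul (r := KB E) (mb E c) K1) (rmul (mb E c) K2).
Proof.
  apply functional_extensionality; intros y; unfold mb; cbn.
  rewrite (add0l HEa), (rmulDr HB); reflexivity.
Qed.

Lemma mb_mul0r c : rmul (r := KB E) (mb E c) (rzero (KB E)) = rzero (KB E).
Proof.
  apply functional_extensionality; intros y; unfold mb; cbn.
  rewrite (rmul0r HB); reflexivity.
Qed.

Lemma mb_mulNr c K : rmul (r := KB E) (mb E c) (ropp K) = ropp (rmul (r := KB E) (mb E c) K).
Proof.
  apply functional_extensionality; intros y; unfold mb; cbn.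
  rewrite (opp0 HEa), (rmulNr HB); reflexivity.
Qed.

Lemma compact_mb : quadratik B -> forall b, compactEB (mb E b).
Proof.
  intros HBq; apply (quadratik_ind HBq).
  - rewrite mb_zero; apply compact_zero.
  - intros b c Hb Hc; rewrite <- mb_add; apply (compact_add HEB); auto.
  - intros p q.
    replace (mb E (rmul p q))
      with (theta (EBmod E) (mzero E, p) (fun y => radd (rzero B) (rmul q (snd y)))).
    + apply (compact_theta HEB); exists (fun _ => rzero B), q; split;
      [apply (mfun_zero HE) | reflexivity].
    + apply functional_extensionality; intros y; unfold theta, mb; cbn.
      rewrite (msmul0l HE), (add0l HBa), (rmulA HB); auto.
Qed.

Lemma compact_corner K : compactEB K -> exists k, forall d, snd (K (mzero E, d)) = rmul k d.
Proof.
  intros [s [Hs HK]].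
  enough (exists k, forall d,
    snd (msum (EBmod E) (map (fun p => msmul (fst p) (snd p (mzero E, d))) s)) = rmul k d)
    as [k Hk] by (exists k; intros d; rewrite HK; auto).
  clear HK.
  induction s as [|p s IH].
  - exists (rzero B); intros d; symmetry; apply (rmul0l HB).
  - destruct IH as [k Hk]; [intros q Hq; apply Hs; right; exact Hq|].
    destruct p as [e psi].
    destruct (proj2 (Hs _ (or_introl eq_refl))) as (phi & c & Hphi & Hpsi); cbn in Hpsi; subst psi.
    exists (radd (rmul (snd e) c) k); intros d; unfold msum in Hk |- *; cbn [map fold_right].
    change (snd (@madd _ _ (EBmod E) ?x ?y)) with (radd (snd x) (snd y)); rewrite Hk; cbn.
    rewrite (functional_zero HE phi HBa Hphi), (add0l HBa), (rmulDl HB), (rmulA HB); reflexivity.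
Qed.

Lemma compact_corner_MB K b c : compactEB K ->
  MB E (rmul (r := KB E) (mb E c) (rmul (r := KB E) K (mb E b))).
Proof.
  intros HK; destruct (compact_corner K HK) as [k Hk].
  exists (rmul c (rmul k b)); apply functional_extensionality; intros y; unfold mb; cbn.
  rewrite Hk, !(rmulA HB); reflexivity.
Qed.

End CornerMultiplications.

(** * The module F M_B *)

Section CornerModule.
Context {G : group} {B : ringD G} (HB : is_gring B) (HBq : quadratik B) {E : modD B}
  (HE : is_rfmod (fun _ => True) E (fun _ => True)) (HEw : weakly_cofull E)
  {F : modD (KB E)}
  (HF : is_rfmod (R := KB E) (compact (EBmod E) (fun _ => True)) F (fun _ => True))
  (HFc : cofull F (fun _ => True)).

Local Notation compactEB := (compact (EBmod E) (fun _ => True)).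
Let HBa := gring_abgroup HB.
Let HEB := EB_rfmod HB HE.
Let HKa : abgroup (@radd G (KB E)) (@ropp G (KB E)) (rzero (KB E)) := opRing_abgroup HEB.
Let HFa := rfmod_abgroup HF.
Let Hmb := compact_mb HB HE HBq.

Lemma MB_compact K : MB E K -> compactEB K.
Proof. intros [b ->]; apply Hmb. Qed.

Lemma MB_zero : MB E (rzero (KB E)).
Proof. exists (rzero B); symmetry; apply (mb_zero HB). Qed.

Lemma MB_add K1 K2 : MB E K1 -> MB E K2 -> MB E (radd K1 K2).
Proof. intros [b ->] [c ->]; exists (radd b c); apply (mb_add HB HE). Qed.

Lemma FMB_zero : FMB F (mzero F).
Proof. exists []; reflexivity. Qed.

Lemma FMB_add x y : FMB F x -> FMB F y -> FMB F (madd x y).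
Proof.
  intros [s1 ->] [s2 ->]; exists (s1 ++ s2); unfold msum; rewrite map_app, (sum_app HFa);
    reflexivity.
Qed.

Lemma FMB_mb x b : FMB F (msmul x (mb E b)).
Proof. exists [(x, b)]; symmetry; apply (add0r HFa). Qed.

Lemma FMB_ind (P : F -> Prop) :
  P (mzero F) -> (forall x y, P x -> P y -> P (madd x y)) -> (forall x b, P (msmul x (mb E b))) ->
  forall x, FMB F x -> P x.
Proof.
  intros P0 PD Pmb x [s ->]; unfold msum; apply sum_ind; auto.
  intros y Hy; apply in_map_iff in Hy; destruct Hy as [p [<- _]]; apply Pmb.
Qed.

Lemma FMB_sum l : (forall x, In x l -> FMB F x) -> FMB F (msum F l).
Proof. apply sum_ind; [exact FMB_zero | exact FMB_add]. Qed.

Lemma FMB_opp x : FMB F x -> FMB F (mopp x).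
Proof.
  revert x; apply FMB_ind.
  - rewrite (opp0 HFa); exact FMB_zero.
  - intros x y Hx Hy; rewrite (oppD HFa); apply FMB_add; auto.
  - intros x b; rewrite <- (msmulNl HF) by apply Hmb; apply FMB_mb.
Qed.

Lemma FMB_smul_MB x K : FMB F x -> MB E K -> FMB F (msmul x K).
Proof.
  intros Hx [c ->]; revert x Hx; apply FMB_ind.
  - rewrite (msmul0l HF) by apply Hmb; exact FMB_zero.
  - intros x y Hx Hy; rewrite (msmulDl HF) by apply Hmb; apply FMB_add; auto.
  - intros x b; rewrite (msmulA HF), (mb_mul HB) by apply Hmb; apply FMB_mb.
Qed.

Lemma FMB_act g x : FMB F x -> FMB F (mact g x).
Proof.
  revert x; apply FMB_ind.
  - rewrite (mact0 HF); exact FMB_zero.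
  - intros x y Hx Hy; rewrite (mactD HF); apply FMB_add; auto.
  - intros x b; rewrite (mact_smul HF), (mb_act HB HE) by apply Hmb; apply FMB_mb.
Qed.

Lemma mb_functional_MB phi c x : mfun F phi -> FMB F x -> MB E (rmul (r := KB E) (mb E c) (phi x)).
Proof.
  intros Hphi; revert x; apply FMB_ind.
  - rewrite (functional_zero HF phi HKa Hphi), (mb_mul0r HB); exact MB_zero.
  - intros x y Hx Hy; rewrite (functional_add HF _ Hphi), (mb_mulDr HB HE).
    apply MB_add; auto.
  - intros x b; rewrite (functional_smul HF _ Hphi) by apply Hmb.
    apply (compact_corner_MB HB HE), (functional_in HF _ Hphi).
Qed.

Lemma ThetaFMB_MB psi x : ThetaFMB F psi -> FMB F x -> MB E (psi x).
Proof.
  intros [s [Hs Hpsi]] Hx; rewrite Hpsi by exact Hx; unfold rsum.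
  apply sum_ind; [exact MB_zero | exact MB_add |].
  intros K HK; apply in_map_iff in HK; destruct HK as [p [<- Hp]].
  destruct (Hs p Hp) as [[c ->] Hphi]; apply mb_functional_MB; auto.
Qed.

Lemma ThetaFMB_extends psi : ThetaFMB F psi ->
  exists phi, mfun F phi /\ forall x, FMB F x -> psi x = phi x.
Proof.
  intros [s [Hs Hpsi]]; eexists; split; [|exact Hpsi].
  apply (mfun_sum HF); intros p Hp; destruct (Hs p Hp); auto using MB_compact.
Qed.

Lemma ThetaFMB_mb_functional c phi : mfun F phi ->
  ThetaFMB F (fun x => rmul (r := KB E) (mb E c) (phi x)).
Proof.
  intros Hphi; exists [(mb E c, phi)]; split.
  - intros p [<- | []]; split; [exists c |]; auto.
  - intros x _; symmetry; apply (add0r HKa).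
Qed.

Lemma ThetaFMB_zero : ThetaFMB F (fun _ => rzero (KB E)).
Proof. exists []; split; [intros p [] | reflexivity]. Qed.

Lemma ThetaFMB_add psi1 psi2 : ThetaFMB F psi1 -> ThetaFMB F psi2 ->
  ThetaFMB F (fun x => radd (psi1 x) (psi2 x)).
Proof.
  intros [s1 [Hs1 H1]] [s2 [Hs2 H2]]; exists (s1 ++ s2); split.
  - intros p Hp; apply in_app_or in Hp; destruct Hp; auto.
  - intros x Hx; rewrite H1, H2 by exact Hx; unfold rsum; rewrite map_app, (sum_app HKa);
    reflexivity.
Qed.

Lemma ThetaFMB_opp psi : ThetaFMB F psi -> ThetaFMB F (fun x => ropp (psi x)).
Proof.
  intros [s [Hs Hpsi]]; exists (map (fun p => (fst p, fun x => ropp (snd p x))) s); split.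
  - intros p Hp; apply in_map_iff in Hp; destruct Hp as [q [<- Hq]]; destruct (Hs q Hq).
    split; [|apply (mfun_opp HF)]; auto.
  - intros x Hx; rewrite Hpsi by exact Hx; unfold rsum.
    rewrite (additive_sum _ _ _ _ (@ropp G (KB E)) (oppD HKa) (opp0 HKa)), !map_map.
    f_equal; apply map_ext_in; intros p Hp; destruct (Hs p Hp) as [[c ->] _].
    symmetry; apply (mb_mulNr HB HE).
Qed.

Lemma ThetaFMB_lmul K psi : MB E K -> ThetaFMB F psi -> ThetaFMB F (fun x => rmul K (psi x)).
Proof.
  intros [c ->] [s [Hs Hpsi]];
    exists (map (fun p => (rmul (r := KB E) (mb E c) (fst p), snd p)) s); split.
  - intros p Hp; apply in_map_iff in Hp; destruct Hp as [q [<- Hq]];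
    destruct (Hs q Hq) as [[b ->] Hphi].
    split; [exists (rmul c b); apply (mb_mul HB) | exact Hphi].
  - intros x Hx; rewrite Hpsi by exact Hx; unfold rsum.
    rewrite (additive_sum _ _ _ _ _ (mb_mulDr HB HE c) (mb_mul0r HB c)), !map_map; reflexivity.
Qed.

Lemma ThetaFMB_act g psi : ThetaFMB F psi ->
  ThetaFMB F (fun x => ract g (psi (mact (ginv g) x))).
Proof.
  intros [s [Hs Hpsi]].
  exists (map (fun p => (ract (r := KB E) g (fst p),
    fun x => ract g (snd p (mact (ginv g) x)))) s); split.
  - intros p Hp; apply in_map_iff in Hp; destruct Hp as [q [<- Hq]];
    destruct (Hs q Hq) as [[b ->] Hphi].
    split; [exists (ract g b); apply (mb_act HB HE) | apply (mfun_act HF), Hphi].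
  - intros x Hx; rewrite Hpsi by (apply FMB_act, Hx); unfold rsum.
    rewrite (additive_sum _ _ _ _ _ (opRing_actD HEB g) (opRing_act0 HEB g)), !map_map.
    f_equal; apply map_ext; intros p; apply (opRing_act_mul HEB).
Qed.

Lemma FMB_rfmod : is_rfmod (MB E) (FMBmod F) (FMB F).
Proof.
  apply (is_rfmod_sub HF);
    auto using MB_compact, FMB_zero, FMB_add, FMB_opp, FMB_smul_MB, FMB_act,
      ThetaFMB_zero, ThetaFMB_add, ThetaFMB_opp, ThetaFMB_lmul, ThetaFMB_act.
  intros psi Hpsi; destruct (ThetaFMB_extends psi Hpsi) as [phi [Hphi Hext]].
  repeat split; intros.
  - apply ThetaFMB_MB; auto.
  - rewrite !Hext by auto using FMB_add; apply (functional_add HF _ Hphi).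
  - rewrite !Hext by auto using FMB_smul_MB; apply (functional_smul HF _ Hphi), MB_compact; auto.
Qed.

Definition FMB_theta_sum (f : F -> F) : Prop :=
  exists s : list (F * (F -> KB E)),
    (forall p, In p s -> FMB F (fst p) /\ mfun F (snd p) /\ ThetaFMB F (snd p)) /\
    forall x, f x = msum F (map (fun p => msmul (fst p) (snd p x)) s).

Lemma FMB_theta_sum_ext f g : FMB_theta_sum f -> (forall x, f x = g x) -> FMB_theta_sum g.
Proof.
  intros [s [Hs Hf]] Hfg; exists s; split; [exact Hs|].
  intros x; rewrite <- Hfg; apply Hf.
Qed.

Lemma FMB_theta_sum_zero : FMB_theta_sum (fun _ => mzero F).
Proof. exists []; split; [intros p [] | reflexivity]. Qed.

Lemma FMB_theta_sum_add f1 f2 : FMB_theta_sum f1 -> FMB_theta_sum f2 ->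
  FMB_theta_sum (fun x => madd (f1 x) (f2 x)).
Proof.
  intros [s1 [Hs1 H1]] [s2 [Hs2 H2]]; exists (s1 ++ s2); split.
  - intros p Hp; apply in_app_or in Hp; destruct Hp; auto.
  - intros x; rewrite H1, H2; unfold msum; rewrite map_app, (sum_app HFa); reflexivity.
Qed.

Lemma FMB_theta_sum_msum {T : Type} (s : list T) (f : T -> F -> F) :
  (forall t, In t s -> FMB_theta_sum (f t)) ->
  FMB_theta_sum (fun x => msum F (map (fun t => f t x) s)).
Proof.
  induction s as [|t s IH]; intros Hs; [exact FMB_theta_sum_zero|].
  apply (FMB_theta_sum_add (f t)); [apply Hs; left; reflexivity|].
  apply IH; intros u Hu; apply Hs; right; exact Hu.
Qed.

Lemma FMB_theta_sum_mb xi c phi : FMB F xi -> mfun F phi ->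
  FMB_theta_sum (fun x => msmul xi (rmul (r := KB E) (mb E c) (phi x))).
Proof.
  intros Hxi Hphi; exists [(xi, fun x => rmul (r := KB E) (mb E c) (phi x))]; split.
  - intros p [<- | []]; cbn [fst snd]; split; [|split]; auto using ThetaFMB_mb_functional.
    apply (mfun_lmul HF); [apply Hmb | exact Hphi].
  - intros x; symmetry; apply (add0r HFa).
Qed.

Section SmulFunctional.
Variable phi : F -> KB E.
Hypothesis Hphi : mfun F phi.

Let through_FMB (z : F) (K : KB E) : Prop :=
  FMB_theta_sum (fun x => msmul z (rmul (r := KB E) K (phi x))).

Lemma through_FMB_zero z : through_FMB z (rzero (KB E)).
Proof.
  apply (FMB_theta_sum_ext _ _ FMB_theta_sum_zero); intros x; symmetry.
  apply (msmul0r HF); [apply compact_zero | apply (add0l HKa)].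
Qed.

Lemma through_FMB_add z (K1 K2 : KB E) : compactEB K1 -> compactEB K2 ->
  through_FMB z K1 -> through_FMB z K2 -> through_FMB z (radd K1 K2).
Proof.
  intros HK1 HK2 H1 H2; apply (FMB_theta_sum_ext _ _ (FMB_theta_sum_add _ _ H1 H2)); intros x.
  rewrite <- (msmulDr HF); [reflexivity | |];
    apply (compact_mul HEB); auto; apply (functional_in HF _ Hphi).
Qed.

Lemma through_FMB_quartic z e p1 p2 q1 q2 psi : mfun (EBmod E) psi ->
  through_FMB z (theta (EBmod E) (msmul e (rmul (rmul p1 p2) (rmul q1 q2))) psi).
Proof.
  intros Hpsi.
  set (T1 := theta (EBmod E) e (fun y => radd (rzero B) (rmul p1 (snd y)))).
  set (T2 := theta (EBmod E) (mzero E, q2) psi).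
  assert (HT1 : compactEB T1).
  { apply (compact_theta HEB); exists (fun _ => rzero B), p1; split;
    [apply (mfun_zero HE) | reflexivity]. }
  assert (HT2 : compactEB T2) by (apply (compact_theta HEB), Hpsi).
  assert (Hfactor : rmul (r := KB E) T1 (rmul (mb E p2) (rmul (mb E q1) T2)) =
                    theta (EBmod E) (msmul e (rmul (rmul p1 p2) (rmul q1 q2))) psi).
  { apply functional_extensionality; intros y; unfold T1, T2, theta, mb; cbn.
    f_equal; rewrite (add0l HBa), ?(msmulA HE), !(rmulA HB) by exact I; reflexivity. }
  rewrite <- Hfactor.
  assert (HTphi : mfun F (fun x => rmul (r := KB E) T2 (phi x))) by (apply (mfun_lmul HF); auto).
  apply (FMB_theta_sum_ext _ _ (FMB_theta_sum_mb _ q1 _ (FMB_mb (msmul z T1) p2) HTphi)); intros x.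
  assert (Htail : compactEB (rmul (r := KB E) (mb E q1) (rmul (r := KB E) T2 (phi x)))).
  { apply (compact_mul HEB _ (Hmb q1)), (compact_mul HEB _ HT2), (functional_in HF _ Hphi). }
  rewrite (msmulA HF _ _ _ (Hmb p2) Htail).
  rewrite (msmulA HF _ _ _ HT1 (compact_mul HEB _ (Hmb p2) _ Htail)); reflexivity.
Qed.

Lemma through_FMB_theta z e psi : mfun (EBmod E) psi -> through_FMB z (theta (EBmod E) e psi).
Proof.
  revert z psi; induction e using (weakly_cofull_ind (EB_weakly_cofull HB HE HBq HEw)).
  - intros z psi Hpsi; rewrite (theta_zero_l HEB _ Hpsi); apply through_FMB_zero.
  - intros z psi Hpsi; rewrite (theta_add_l HEB _ _ _ Hpsi).
    apply through_FMB_add; try apply (compact_theta HEB); auto.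
  - induction a using (quadratik_ind4 HB HBq).
    + intros z psi Hpsi; rewrite (msmul0r HEB) by (exact I || apply (add0l HBa)).
      rewrite (theta_zero_l HEB _ Hpsi); apply through_FMB_zero.
    + intros z psi Hpsi; rewrite (msmulDr HEB), (theta_add_l HEB _ _ _ Hpsi) by exact I.
      apply through_FMB_add; try apply (compact_theta HEB); auto.
    + intros z psi Hpsi; apply through_FMB_quartic, Hpsi.
Qed.

Lemma through_FMB_compact z K : compactEB K -> through_FMB z K.
Proof.
  intros [s [Hs HK]].
  replace K with (fun y => msum (EBmod E) (map (fun p => theta (EBmod E) (fst p) (snd p) y) s))
    by (apply functional_extensionality; intros y; rewrite HK; reflexivity).
  clear HK; induction s as [|p s IH]; [apply through_FMB_zero|].
  assert (Hp : mfun (EBmod E) (snd p)) by apply (Hs p (or_introl eq_refl)).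
  assert (Htail : forall q, In q s -> True /\ mfun (EBmod E) (snd q))
    by (intros q Hq; apply Hs; right; exact Hq).
  apply (through_FMB_add z (theta (EBmod E) (fst p) (snd p))
           (fun y => msum (EBmod E) (map (fun p => theta (EBmod E) (fst p) (snd p) y) s))).
  - apply (compact_theta HEB), Hp.
  - exists s; split; [exact Htail | reflexivity].
  - apply through_FMB_theta, Hp.
  - apply IH, Htail.
Qed.

Lemma FMB_theta_sum_smul_functional z : FMB_theta_sum (fun x => msmul z (phi x)).
Proof.
  destruct (HFc z I) as [s [Hs ->]].
  apply (FMB_theta_sum_ext (fun x => msum F
    (map (fun t => msmul (fst (fst t)) (rmul (r := KB E) (snd (fst t) (snd t)) (phi x))) s))).
  - apply FMB_theta_sum_msum; intros t Ht; apply through_FMB_compact, (functional_in HF), (Hs t Ht).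
  - intros x; rewrite (msmul_sum_l HF), map_map by apply (functional_in HF _ Hphi).
    f_equal; apply map_ext_in; intros t Ht; symmetry.
    apply (msmulA HF); [apply (functional_in HF), (Hs t Ht) | apply (functional_in HF _ Hphi)].
Qed.

End SmulFunctional.

Lemma FMB_theta_sum_of_compact T : compact F (fun _ => True) T -> FMB_theta_sum T.
Proof.
  intros [s [Hs HT]].
  apply (FMB_theta_sum_ext (fun x => msum F (map (fun p => msmul (fst p) (snd p x)) s))).
  - apply FMB_theta_sum_msum; intros p Hp; apply FMB_theta_sum_smul_functional, (Hs p Hp).
  - intros x; symmetry; apply HT; exact I.
Qed.

Section ThetaSum.
Variable f : F -> F.
Hypothesis Hf : FMB_theta_sum f.

Lemma FMB_theta_sum_FMB x : FMB F x -> FMB F (f x).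
Proof.
  intros Hx; destruct Hf as [s [Hs ->]]; apply FMB_sum.
  intros y Hy; apply in_map_iff in Hy; destruct Hy as [p [<- Hp]].
  destruct (Hs p Hp) as (Hp1 & _ & Hp3).
  apply FMB_smul_MB; [exact Hp1 | apply ThetaFMB_MB; auto].
Qed.

Lemma FMB_theta_sum_compact : compact (FMBmod F) (FMB F) f.
Proof.
  destruct Hf as [s [Hs Hfs]]; exists s; split; [|intros x _; apply Hfs].
  intros p Hp; destruct (Hs p Hp) as (Hp1 & _ & Hp3); split; [exact Hp1 | exact Hp3].
Qed.

Lemma FMB_theta_sum_cofull_at x : FMB F x -> cofull_at (FMBmod F) (FMB F) (f x).
Proof.
  intros Hx; destruct Hf as [s [Hs ->]]; exists (map (fun p => (p, x)) s); split.
  - intros t Ht; apply in_map_iff in Ht; destruct Ht as [p [<- Hp]].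
    destruct (Hs p Hp) as (Hp1 & _ & Hp3); cbn; auto.
  - rewrite map_map; reflexivity.
Qed.

Lemma compact_agree_on_theta_sum T T' : compact F (fun _ => True) T ->
  compact F (fun _ => True) T' ->
  (forall x, FMB F x -> T x = T' x) -> forall w, T (f w) = T' (f w).
Proof.
  intros HT HT' Hagree w; destruct Hf as [s [Hs ->]].
  assert (Hval : forall p, In p s -> compactEB (snd p w)).
  { intros p Hp; apply (functional_in HF), (Hs p Hp). }
  rewrite (compact_msum_smul HF _ HT), (compact_msum_smul HF _ HT') by exact Hval.
  f_equal; apply map_ext_in; intros p Hp; rewrite Hagree; [reflexivity | apply (Hs p Hp)].
Qed.

End ThetaSum.

Lemma FMB_cofull : cofull (FMBmod F) (FMB F).
Proof.
  change (forall x, FMB F x -> cofull_at (FMBmod F) (FMB F) x); apply FMB_ind.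
  - apply (@cofull_at_zero _ _ (FMBmod F)).
  - apply (@cofull_at_add _ _ (FMBmod F) _ _ HFa).
  - intros xi b; destruct (HFc xi I) as [s [Hs ->]].
    rewrite (msmul_sum_l HF), map_map by apply Hmb; apply (@cofull_at_sum _ _ (FMBmod F) _ _ HFa).
    intros y Hy; apply in_map_iff in Hy; destruct Hy as [t [<- Ht]].
    destruct (Hs t Ht) as (_ & Hphi & _).
    rewrite (msmulA HF), <- (functional_smul HF _ Hphi)
      by (apply Hmb || apply (functional_in HF _ Hphi)).
    apply (FMB_theta_sum_cofull_at _ (FMB_theta_sum_smul_functional _ Hphi _)), FMB_mb.
Qed.

Lemma compact_restrict_FMB T : compact F (fun _ => True) T ->
  (forall x, FMB F x -> FMB F (T x)) /\ compact (FMBmod F) (FMB F) T.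
Proof.
  intros HT; pose proof (FMB_theta_sum_of_compact T HT) as Hsum.
  split; [apply FMB_theta_sum_FMB | apply FMB_theta_sum_compact]; exact Hsum.
Qed.

Lemma compact_eq_of_agree_on_FMB T T' : compact F (fun _ => True) T ->
  compact F (fun _ => True) T' ->
  (forall x, FMB F x -> T x = T' x) -> T = T'.
Proof.
  intros HT HT' Hagree; apply functional_extensionality; intros x.
  destruct (HFc x I) as [s [Hs ->]]; unfold msum.
  rewrite (additive_sum _ _ _ _ T (compact_additive HF _ HT) (compact_zero_at HF _ HT)).
  rewrite (additive_sum _ _ _ _ T' (compact_additive HF _ HT') (compact_zero_at HF _ HT')).
  rewrite !map_map; f_equal; apply map_ext_in; intros t Ht; destruct (Hs t Ht) as (_ & Hphi & _).
  apply (compact_agree_on_theta_sum _ (FMB_theta_sum_smul_functional _ Hphi (fst (fst t)))); auto.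
Qed.

Lemma compact_FMB_extends U : compact (FMBmod F) (FMB F) U ->
  exists T, compact F (fun _ => True) T /\ forall x, FMB F x -> T x = U x.
Proof.
  intros [s [Hs HU]].
  enough (exists T, compact F (fun _ => True) T /\
            forall x, FMB F x -> T x = msum F (map (fun p => msmul (fst p) (snd p x)) s))
    as [T [HT HTs]] by (exists T; split; [exact HT | intros x Hx; rewrite HTs, HU; auto]).
  clear HU; induction s as [|p s IH].
  - exists (rzero (opRing F)); split; [apply compact_zero | reflexivity].
  - destruct IH as [T [HT HTs]]; [intros q Hq; apply Hs; right; exact Hq|].
    destruct (Hs p (or_introl eq_refl)) as [_ Hpsi].
    destruct (ThetaFMB_extends _ Hpsi) as [phi [Hphi Hext]].
    exists (radd (r := opRing F) (theta F (fst p) phi) T); split.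
    + apply (compact_add HF); [apply (compact_theta HF), Hphi | exact HT].
    + intros x Hx; cbn; unfold theta; rewrite Hext, HTs; auto.
Qed.

End CornerModule.

Theorem proposition8p1 (G : group) (B : ringD G) (HB : is_gring B) (HBq : quadratik B)
  (E : modD B) (HE : is_rfmod (fun _ : rcar B => True) E (fun _ => True))
  (HEw : weakly_cofull E)
  (F : modD (KB E))
  (HF : is_rfmod (R := KB E) (compact (EBmod E) (fun _ => True)) F (fun _ => True))
  (HFc : cofull F (fun _ => True)) :
  (* M_B is contained in K_B(E (+) B) *)
  (forall b : rcar B, compact (EBmod E) (fun _ => True) (mb E b)) /\
  (* F M_B is a right functional module over M_B ~ B *)
  is_rfmod (R := KB E) (MB E) (FMBmod F) (FMB F) /\
  (* F M_B is cofull *)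
  cofull (FMBmod F) (FMB F) /\
  (* pi(T) = T|_{F M_B} is a well-defined map K(F) -> K_B(F M_B) ... *)
  (forall T : mcar F -> mcar F, compact F (fun _ => True) T ->
     (forall x, FMB F x -> FMB F (T x)) /\ compact (FMBmod F) (FMB F) T) /\
  (* ... which is injective ... *)
  (forall T T' : mcar F -> mcar F,
     compact F (fun _ => True) T -> compact F (fun _ => True) T' ->
     (forall x, FMB F x -> T x = T' x) -> T = T') /\
  (* ... and surjective *)
  (forall U : mcar F -> mcar F, compact (FMBmod F) (FMB F) U ->
     exists T : mcar F -> mcar F, compact F (fun _ => True) T /\
       (forall x, FMB F x -> T x = U x)).
Proof.
  split; [apply compact_mb; assumption|].
  split; [apply FMB_rfmod; assumption|].
  split; [apply FMB_cofull; assumption|].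
  split; [apply compact_restrict_FMB; assumption|].
  split; [apply compact_eq_of_agree_on_FMB; assumption|].
  apply compact_FMB_extends; assumption.
Qed.
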